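(* Let $f$ be a complex polynomial of degree $d$ with $f(0)\neq0$, with roots $\zeta_1,\dots,\zeta_d$ (with multiplicity) ordered so that $|\zeta_1|\le\cdots\le|\zeta_d|$, not all of the same modulus. Let $\rho=\min\{|\zeta_{i+1}|/|\zeta_i|:|\zeta_{i+1}|>|\zeta_i|\}$, $I=\{i:1\le i\le d-1,\ |\zeta_i|<|\zeta_{i+1}|\}\cup\{0,d\}$, $N\ge 0$, $R=\rho^{2^N}$, $g=G^Nf=\sum_i g_ix^i$, $r_i=-2^{-N}\log|g_i|$, and for $0\le a<b\le d$ put $S(a,b)=\frac{r_b-r_a}{b-a}$. Assume: (a) $m\ge i_2-i_1$ for all successive elements $i_1<i_2$ of $I$; (b) $2^{-N+1}\log(2^m+2^dR^{-1})-2^{-N+2}\log(1-2^dR^{-1})<E<\frac{\log\rho}{2}$; (c) $0\le i<j<k\le d$. Then: 1. If $i$ and $j$ are successive elements of $I$ and no element of $I$ lies strictly between $j$ and $k$, then $S(i,j)<S(j,k)-E$. 2. If $i$ and $k$ are successive elements of $I$, then $S(i,j)>S(j,k)-E$.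
   Context: $\log$ is the natural logarithm. The Graeffe operator maps a degree $d$ polynomial $f$ to $Gf(x)=(-1)^d f(\sqrt{x})f(-\sqrt{x})$, again of degree $d$; $G^N$ is its $N$-th iterate. Two elements $i_1<i_2$ of $I$ are successive if no element of $I$ lies strictly between them. Hypothesis (b) implicitly requires $2^dR^{-1}<1$. *)

From HB Require Import structures.
From mathcomp Require Import all_boot all_order all_algebra.
From mathcomp Require Import all_classical all_reals all_analysis.
From mathcomp Require Import complex.
Set Implicit Arguments. Unset Strict Implicit. Unset Printing Implicit Defensive.
Import Order.TTheory GRing.Theory Num.Theory.
Local Open Scope ring_scope.

Definition cmod {R : rcfType} (z : R[i]) : R := ComplexField.Normc.normc z.

(* Graeffe operator: Gf(x) = (-1)^d f(sqrt x) f(-sqrt x), with d = deg f.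
   Writing f(x) = fe(x^2) + x fo(x^2), we get
   f(sqrt x) f(-sqrt x) = fe(x)^2 - x fo(x)^2. *)
Definition graeffe {F : comNzRingType} (f : {poly F}) : {poly F} :=
  let fe := \poly_(i < size f) f`_(2 * i) in
  let fo := \poly_(i < size f) f`_(2 * i + 1) in
  (-1) ^+ (size f).-1 *: (fe ^+ 2 - 'X * fo ^+ 2).

Definition rcoef {R : realType} (N : nat) (g : {poly R[i]}) (i : nat) : \bar R :=
  if g`_i == 0 then +oo%E
  else (- (2 ^- N) * ln (cmod g`_i))%:E.

Definition slopeS {R : realType} (r : nat -> \bar R) (a b : nat) : \bar R :=
  ((r b - r a) * ((b - a)%:R^-1 : R)%:E)%E.

(* membership in I = {i : 1 <= i <= d-1, |z_i| < |z_{i+1}|} u {0, d};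
   roots are indexed z_1, ..., z_d *)
Definition inI {R : realType} (d : nat) (z : nat -> R[i]) (i : nat) : bool :=
  [|| i == 0%N, i == d | [&& (1 <= i)%N, (i <= d.-1)%N & cmod (z i) < cmod (z i.+1)]].

Definition successive {R : realType} (d : nat) (z : nat -> R[i]) (i1 i2 : nat) : Prop :=
  [/\ inI d z i1, inI d z i2, (i1 < i2)%N &
      forall l, (i1 < l < i2)%N -> ~~ inI d z l].

From HB Require Import structures.
From mathcomp Require Import all_boot all_order all_algebra.
From mathcomp Require Import all_classical all_reals all_analysis.
From mathcomp Require Import complex.
From mathcomp Require Import zify ring lra.
Set Implicit Arguments. Unset Strict Implicit. Unset Printing Implicit Defensive.
Import Order.TTheory GRing.Theory Num.Theory.
Local Open Scope ring_scope.

(* After N Graeffe steps, g = c^(2^N) prod_l (X - w_l) with w_l = z_l^(2^N): the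
   roots of g have equal moduli inside each block of I, and consecutive blocks
   are separated by the factor R = rho^(2^N).  Expanding g_t as a convolution of
   the products over the roots below and above a block boundary, one term
   dominates, namely |c|^(2^N) prod_(l > t) |w_l|; the others are smaller by a
   factor 2^d / R at the points t of I, and inside a block the binomial
   coefficients lose at most a factor 2^m.  Hence r_t is at least the piecewise
   linear function lambda_t = -2^-N log (|c|^(2^N) prod_(l > t) |w_l|) minus
   alpha = 2^-N log (2^m + 2^d/R), and at the points of I at most lambda_t plus
   beta = -2^-N log (1 - 2^d/R).  The slopes of lambda are the log |z_l|:
   constant along a block and jumping by at least log rho at each point of I,
   while (b) says 2 alpha + 4 beta < E < (log rho) / 2. *)

Arguments cmod : simpl never.

Section ComplexModulus.
Variable R : rcfType.
Implicit Types x y : R[i].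

Lemma cmod_ge0 x : 0 <= cmod x.
Proof. by case: x => a b; rewrite /cmod /=; apply: sqrtr_ge0. Qed.

Lemma cmod_eq0 x : (cmod x == 0) = (x == 0).
Proof.
apply/eqP/eqP; first exact: ComplexField.Normc.eq0_normc.
by move=> ->; exact: ComplexField.Normc.normc0.
Qed.

Lemma cmod_gt0 x : (0 < cmod x) = (x != 0).
Proof. by rewrite lt_def cmod_ge0 cmod_eq0 andbT. Qed.

Lemma cmod0 : cmod (0 : R[i]) = 0.
Proof. exact: ComplexField.Normc.normc0. Qed.

Lemma cmod1 : cmod (1 : R[i]) = 1.
Proof. exact: ComplexField.Normc.normc1. Qed.

Lemma cmodN x : cmod (- x) = cmod x.
Proof. exact: normcN. Qed.

Lemma cmodM x y : cmod (x * y) = cmod x * cmod y.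
Proof. exact: ComplexField.Normc.normcM. Qed.

Lemma cmodX x n : cmod (x ^+ n) = cmod x ^+ n.
Proof. by elim: n => [|n IH]; rewrite ?expr0 ?cmod1 // !exprS cmodM IH. Qed.

Lemma cmod_prod (I : Type) (s : seq I) (P : pred I) (F : I -> R[i]) :
  cmod (\prod_(l <- s | P l) F l) = \prod_(l <- s | P l) cmod (F l).
Proof. exact: (big_morph _ cmodM cmod1). Qed.

Lemma cmodD x y : cmod (x + y) <= cmod x + cmod y.
Proof. exact: le_normcD. Qed.

Lemma cmodB x y : cmod (x - y) <= cmod x + cmod y.
Proof. by rewrite -(cmodN y) cmodD. Qed.

Lemma cmodBD x y : cmod x - cmod y <= cmod (x + y).
Proof. by rewrite lerBlDr -[x in cmod x](addrK y) -(cmodN y) cmodD. Qed.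

Lemma cmod_sum (I : Type) (s : seq I) (P : pred I) (F : I -> R[i]) :
  cmod (\sum_(l <- s | P l) F l) <= \sum_(l <- s | P l) cmod (F l).
Proof.
elim/big_rec2: _ => [|l y Y _ IH]; first by rewrite cmod0.
by apply: le_trans (cmodD _ _) _; rewrite lerD2l.
Qed.

End ComplexModulus.

Lemma bin_leq_exp2 n t : ('C(n, t) <= 2 ^ n)%N.
Proof.
elim: n t => [|n IH] [|t] //; first by rewrite bin0 expn_gt0.
by rewrite binS expnS mul2n -addnn leq_add.
Qed.

Lemma bin_ltn_exp2 n t : (0 < n)%N -> ('C(n, t) < 2 ^ n)%N.
Proof.
case: n => // n _; elim: n t => [|n IH] [|t]; rewrite ?bin0 ?(ltn_exp2l 0) //.
  by case: t.
by rewrite binS expnS mul2n -addnn -addSn leq_add // ltnW.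
Qed.

Section LinearFactors.
Variable R : rcfType.
Implicit Types (s : seq R[i]) (M V : R).

Lemma coefMXsubC (p : {poly R[i]}) c t :
  (p * ('X - c%:P))`_t = (if t == 0%N then 0 else p`_t.-1) - p`_t * c.
Proof. by rewrite mulrBr coefB coefMX coefMC. Qed.

Lemma cmod_coef0_prod_XsubC (I : Type) (s : seq I) (F : I -> R[i]) :
  cmod ((\prod_(l <- s) ('X - (F l)%:P))`_0) = \prod_(l <- s) cmod (F l).
Proof.
rewrite coef0_prod cmod_prod; apply: eq_bigr => l _.
by rewrite coefB coefX coefC sub0r cmodN.
Qed.

Lemma coef_size_prod_XsubC s : (\prod_(x <- s) ('X - x%:P))`_(size s) = 1.
Proof.
by have := lead_coef_prod_XsubC s xpredT id; rewrite lead_coefE size_prod_XsubC.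
Qed.

Lemma coef_prod_XsubC_small_roots s M : 0 <= M -> {in s, forall x, cmod x <= M} ->
  forall t, cmod ((\prod_(x <- s) ('X - x%:P))`_t) <= 'C(size s, t)%:R * M ^+ (size s - t).
Proof.
move=> M0; elim: s => [|y s IH] hs t.
  by rewrite big_nil coefC; case: t => [|t]; rewrite ?cmod1 ?cmod0 ?mul1r ?bin0n ?mul0r.
have {hs}[hy /IH {}IH] : cmod y <= M /\ {in s, forall x, cmod x <= M}.
  by split=> [|x xs]; apply: hs; rewrite inE ?eqxx ?xs ?orbT.
rewrite big_cons [('X - _) * _]mulrC coefMXsubC /=; apply: le_trans (cmodB _ _) _; rewrite cmodM.
case: t => [|t] /=.
  rewrite cmod0 add0r !bin0 mul1r subn0 exprSr.
  by apply: ler_pM (cmod_ge0 _) (cmod_ge0 _) _ hy; have := IH 0%N; rewrite bin0 mul1r subn0.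
rewrite binS natrD mulrDl subSS [X in _ <= X]addrC; apply: lerD; first exact: IH.
apply: le_trans (ler_pM (cmod_ge0 _) (cmod_ge0 _) (IH t.+1) hy) _.
have [st|ts] := ltnP (size s) t.+1; first by rewrite bin_small // !mul0r.
by rewrite -mulrA -exprSr subnSK.
Qed.

Lemma coef_prod_XsubC_large_roots s V : 0 <= V -> {in s, forall x, V <= cmod x} ->
  forall t, cmod ((\prod_(x <- s) ('X - x%:P))`_t) * V ^+ t <=
            'C(size s, t)%:R * cmod ((\prod_(x <- s) ('X - x%:P))`_0).
Proof.
move=> V0; elim: s => [|y s IH] hs t.
  by rewrite big_nil !coefC; case: t => [|t]; rewrite ?mulr1 ?mul1r // cmod0 !mul0r.
have {hs}[hy /IH {}IH] : V <= cmod y /\ {in s, forall x, V <= cmod x}.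
  by split=> [|x xs]; apply: hs; rewrite inE ?eqxx ?xs ?orbT.
rewrite big_cons [('X - _) * _]mulrC !coefMXsubC /= sub0r cmodN cmodM.
case: t => [|t] /=; first by rewrite sub0r cmodN cmodM mulr1 mul1r.
apply: le_trans (ler_wpM2r (exprn_ge0 _ V0) (cmodB _ _)) _.
rewrite cmodM binS natrD !mulrDl.
have xv0 t' : 0 <= cmod ((\prod_(x <- s) ('X - x%:P))`_t') * V ^+ t'.
  by rewrite mulr_ge0 ?cmod_ge0 ?exprn_ge0.
have := ler_pM V0 (xv0 t) hy (IH t).
have := ler_wpM2l (cmod_ge0 y) (IH t.+1).
rewrite exprS; lra.
Qed.

End LinearFactors.

Section Convolution.
Variable R : rcfType.
Implicit Types p q : {poly R[i]}.

Lemma cmod_coefM_le p q t k0 : (k0 <= t)%N ->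
  cmod (p * q)`_t <= cmod p`_k0 * cmod q`_(t - k0) +
    \sum_(k < t.+1 | k != k0 :> nat) cmod p`_k * cmod q`_(t - k).
Proof.
move=> kt; rewrite coefM (bigD1 (Ordinal (kt : (k0 < t.+1)%N))) //=.
apply: le_trans (cmodD _ _) _; rewrite cmodM lerD2l.
by apply: le_trans (cmod_sum _ _ _) _; apply: ler_sum => k _; rewrite cmodM.
Qed.

Lemma cmod_coefM_ge p q t k0 : (k0 <= t)%N ->
  cmod p`_k0 * cmod q`_(t - k0) -
    \sum_(k < t.+1 | k != k0 :> nat) cmod p`_k * cmod q`_(t - k) <= cmod (p * q)`_t.
Proof.
move=> kt; rewrite coefM [in X in _ <= X](bigD1 (Ordinal (kt : (k0 < t.+1)%N))) //=.
apply: le_trans _ (cmodBD _ _); rewrite cmodM lerD2l lerN2.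
by apply: le_trans (cmod_sum _ _ _) _; apply: ler_sum => k _; rewrite cmodM.
Qed.

Lemma sum_bin_conv_le n1 n2 t (P : pred 'I_t.+1) (Y : R) : 0 <= Y ->
  \sum_(k < t.+1 | P k) ('C(n1, k) * 'C(n2, t - k))%:R * Y <= (2 ^ (n1 + n2))%:R * Y.
Proof.
move=> Y0; rewrite -mulr_suml ler_wpM2r // -natr_sum ler_nat.
apply: leq_trans (bin_leq_exp2 _ t); rewrite -binomial.Vandermonde.
by rewrite [X in (_ <= X)%N](bigID P) leq_addr.
Qed.

End Convolution.

Section SplitProduct.
Variables (R : rcfType) (s1 s2 : seq R[i]) (M V K : R).
Hypotheses (M_ge0 : 0 <= M) (V_gt0 : 0 < V) (K_ge1 : 1 <= K) (MK_le_V : M * K <= V).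
Hypothesis small_s1 : {in s1, forall x, cmod x <= M}.
Hypothesis large_s2 : {in s2, forall x, V <= cmod x}.

Local Notation p := (\prod_(x <- s1) ('X - x%:P)).
Local Notation q := (\prod_(x <- s2) ('X - x%:P)).
Local Notation n1 := (size s1).
Local Notation n2 := (size s2).
Local Notation q0 := (cmod q`_0).

Let K_gt0 : 0 < K. Proof. exact: lt_le_trans K_ge1. Qed.

Lemma expr_gap_le j : (0 < j)%N -> M ^+ j * K <= V ^+ j.
Proof.
case: j => // j _; apply: le_trans (_ : M ^+ j.+1 * K ^+ j.+1 <= _).
  by rewrite ler_wpM2l ?exprn_ge0 // -[X in X <= _]expr1 ler_weXn2l.
by rewrite -exprMn lerXn2r ?nnegrE ?mulr_ge0 ?(ltW K_gt0) ?(ltW V_gt0).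
Qed.

Lemma cmod_coef_q_le j : cmod q`_j <= 'C(n2, j)%:R * q0 / V ^+ j.
Proof.
rewrite ler_pdivlMr ?exprn_gt0 //.
exact: coef_prod_XsubC_large_roots (ltW V_gt0) large_s2 j.
Qed.

Lemma gap_ratio_le t k m : (k < m)%N -> (m <= n1)%N -> (m <= t)%N ->
  M ^+ (n1 - k) / V ^+ (t - k) <= M ^+ (n1 - m) / (K * V ^+ (t - m)).
Proof.
move=> km mn mt.
have -> : (n1 - k = (n1 - m) + (m - k))%N by lia.
have -> : (t - k = (t - m) + (m - k))%N by lia.
have gap : M ^+ (m - k) / V ^+ (m - k) <= K^-1.
  rewrite ler_pdivrMr ?exprn_gt0 // ler_pdivlMl //.
  by rewrite mulrC expr_gap_le ?subn_gt0.
rewrite !exprD invfM [K * _]mulrC invfM.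
have -> : M ^+ (n1 - m) * M ^+ (m - k) * ((V ^+ (t - m))^-1 * (V ^+ (m - k))^-1) =
          M ^+ (n1 - m) / V ^+ (t - m) * (M ^+ (m - k) / V ^+ (m - k)) by ring.
rewrite [X in _ <= X]mulrA; apply: ler_wpM2l gap.
by rewrite divr_ge0 ?exprn_ge0 // ltW.
Qed.

(* [p`_m * q`_(t - m)] with [m = minn n1 t] is the dominant term of the
   convolution [(p * q)`_t]; every other term is smaller by a factor [K]. *)
Lemma off_diagonal_le t m : m = minn n1 t ->
  \sum_(k < t.+1 | k != m :> nat) cmod p`_k * cmod q`_(t - k) <=
  (2 ^ (n1 + n2))%:R * (M ^+ (n1 - m) * q0 / (K * V ^+ (t - m))).
Proof.
move=> ->; have Y0 : 0 <= M ^+ (n1 - minn n1 t) * q0 / (K * V ^+ (t - minn n1 t)).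
  by rewrite divr_ge0 ?mulr_ge0 ?exprn_ge0 ?cmod_ge0 // ltW.
apply: le_trans _ (sum_bin_conv_le n1 n2 _ Y0).
apply: ler_sum => k hkm; have kt : (k <= t)%N := ltn_ord k.
apply: le_trans (ler_pM (cmod_ge0 _) (cmod_ge0 _)
  (coef_prod_XsubC_small_roots M_ge0 small_s1 k) (cmod_coef_q_le (t - k))) _.
have [n1k|kn1] := ltnP n1 k; first by rewrite bin_small // ?mul0r ?mul0n ?mul0r.
have km : (k < minn n1 t)%N by move: hkm; lia.
have ratio := gap_ratio_le km (geq_minl n1 t) (geq_minr n1 t).
have CCq0 : 0 <= 'C(n1, k)%:R * 'C(n2, t - k)%:R * q0 :> R.
  by rewrite !mulr_ge0 ?cmod_ge0.
move: (ler_wpM2l CCq0 ratio); rewrite natrM; lra.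
Qed.

Lemma cmod_coefM_split_ge : (1 - (2 ^ (n1 + n2))%:R / K) * q0 <= cmod (p * q)`_n1.
Proof.
have off := off_diagonal_le (esym (minnn n1)).
rewrite subnn !expr0 mulr1 mul1r in off.
apply: le_trans (cmod_coefM_ge p q (leqnn n1)).
rewrite coef_size_prod_XsubC cmod1 mul1r subnn; lra.
Qed.

Lemma cmod_coefM_split_le_right t : (n1 <= t)%N ->
  cmod (p * q)`_t <= cmod q`_(t - n1) + (2 ^ (n1 + n2))%:R * (q0 / (K * V ^+ (t - n1))).
Proof.
move=> n1t; have off := off_diagonal_le (esym (minn_idPl n1t)).
rewrite subnn expr0 mul1r in off.
apply: le_trans (cmod_coefM_le p q n1t) _.
by rewrite coef_size_prod_XsubC cmod1 mul1r lerD2l.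
Qed.

Lemma cmod_coefM_split_le_left t : (t <= n1)%N ->
  cmod (p * q)`_t <= ('C(n1, t)%:R + (2 ^ (n1 + n2))%:R / K) * M ^+ (n1 - t) * q0.
Proof.
move=> tn1; have off := off_diagonal_le (esym (minn_idPr tn1)).
rewrite subnn expr0 mulr1 in off.
apply: le_trans (cmod_coefM_le p q (leqnn t)) _; rewrite subnn.
have := ler_wpM2r (cmod_ge0 q`_0) (coef_prod_XsubC_small_roots M_ge0 small_s1 t).
lra.
Qed.

End SplitProduct.

Definition consecutive (isI : pred nat) (i k : nat) : Prop :=
  [/\ isI i, isI k, (i < k)%N & forall l, (i < l < k)%N -> ~~ isI l].

Lemma consecutive_around (isI : pred nat) d t : isI 0 -> isI d -> (1 <= t <= d)%N ->
  exists i k, [/\ consecutive isI i k, (i < t)%N & (t <= k)%N].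
Proof.
move=> isI0 isId /andP[t1 td].
have below : exists x, isI x && (x < t)%N by exists 0%N; rewrite isI0.
have above : exists x, isI x && (t <= x)%N by exists d; rewrite isId.
have below_t x : isI x && (x < t)%N -> (x <= t)%N by case/andP=> _ /ltnW.
have [i /andP[Ii it] imax] := ex_maxnP below below_t.
have [k /andP[Ik tk] kmin] := ex_minnP above.
exists i, k; split => //; split => //; first exact: leq_trans it tk.
move=> l /andP[il lk]; apply/negP => Il.
have [lt|tl] := ltnP l t; first by have := imax l; rewrite Il lt => /(_ isT); lia.
by have := kmin l; rewrite Il tl => /(_ isT); lia.
Qed.

Section Blocks.
Variables (R : rcfType) (w : nat -> R[i]) (d : nat) (isI : pred nat).
Hypothesis isI_le : forall l, isI l -> (l <= d)%N.
Hypothesis cmod_flat :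
  forall l, (1 <= l < d)%N -> ~~ isI l -> cmod (w l) = cmod (w l.+1).

Lemma cmod_block i k : consecutive isI i k ->
  forall l, (i < l <= k)%N -> cmod (w l) = cmod (w k).
Proof.
case=> _ Ik _ inner; have kd := isI_le Ik.
move=> l /andP[il lk]; rewrite -(subnKC lk).
have: (l + (k - l) <= k)%N by rewrite subnKC.
elim: (k - l)%N => [|n IH] lnk; first by rewrite addn0.
rewrite addnS -cmod_flat; [apply: IH | | apply: inner]; lia.
Qed.

Lemma prod_cmod_block i k a b : consecutive isI i k -> (i <= a <= b)%N -> (b <= k)%N ->
  \prod_(a.+1 <= l < b.+1) cmod (w l) = cmod (w k) ^+ (b - a).
Proof.
move=> ik /andP[ia ab] bk; rewrite -(subSS a b) -prodr_const_nat.
by apply: eq_big_nat => l lab; apply: (cmod_block ik); lia.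
Qed.

End Blocks.

Section ClusteredRoots.
Variables (R : rcfType) (w : nat -> R[i]) (d : nat) (isI : pred nat) (K : R).
Hypothesis isI_le : forall l, isI l -> (l <= d)%N.
Hypothesis cmod_w_gt0 : forall l, (1 <= l <= d)%N -> 0 < cmod (w l).
Hypothesis cmod_w_mono :
  forall l l', (1 <= l)%N -> (l <= l' <= d)%N -> cmod (w l) <= cmod (w l').
Hypothesis cmod_gap :
  forall l, (1 <= l < d)%N -> isI l -> K * cmod (w l) <= cmod (w l.+1).
Hypothesis cmod_flat :
  forall l, (1 <= l < d)%N -> ~~ isI l -> cmod (w l) = cmod (w l.+1).

Local Notation P a b := (\prod_(a <= l < b) ('X - (w l)%:P)).
Local Notation Ps a b := (\prod_(x <- map w (index_iota a b)) ('X - x%:P)).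
Local Notation tail t := (\prod_(t.+1 <= l < d.+1) cmod (w l)).

Lemma tail_gt0 t : 0 < tail t.
Proof.
by rewrite big_nat_cond prodr_gt0 // => l /andP[/andP[tl ld] _]; apply: cmod_w_gt0; lia.
Qed.

Lemma tail_block i k t : consecutive isI i k -> (i <= t <= k)%N ->
  tail t = cmod (w k) ^+ (k - t) * tail k.
Proof.
move=> ik itk; have kd : (k <= d)%N by case: ik => _ /isI_le.
rewrite (big_cat_nat _ (n := k.+1)) /=; try lia.
by rewrite (prod_cmod_block isI_le cmod_flat ik) //; lia.
Qed.

Hypothesis K_ge1 : 1 <= K.

Let K_gt0 : 0 < K. Proof. exact: lt_le_trans K_ge1. Qed.

Let in_range (Q : R[i] -> Prop) a b :
  (forall l, (a <= l < b)%N -> Q (w l)) -> {in map w (index_iota a b), forall x, Q x}.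
Proof. by move=> h x /mapP[l lab ->]; apply: h; rewrite -mem_index_iota. Qed.

Let prod_split a b c : (a <= b <= c)%N -> P a c = Ps a b * Ps b c.
Proof. by case/andP=> ab bc; rewrite !big_map -big_cat_nat. Qed.

Let cmod_coef0_Ps a b : cmod (Ps a b)`_0 = \prod_(a <= l < b) cmod (w l).
Proof. by rewrite cmod_coef0_prod_XsubC big_map. Qed.

Let size_Ps a b : size (map w (index_iota a b)) = (b - a)%N.
Proof. by rewrite size_map size_iota. Qed.

Lemma cmod_coef_split_ge t M V : (t <= d)%N -> 0 <= M -> 0 < V -> M * K <= V ->
  (forall l, (1 <= l <= t)%N -> cmod (w l) <= M) ->
  (forall l, (t < l <= d)%N -> V <= cmod (w l)) ->
  (1 - (2 ^ d)%:R / K) * tail t <= cmod (P 1 d.+1)`_t.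
Proof.
move=> td M0 V0 MKV small large.
have small' : {in map w (index_iota 1 t.+1), forall x, cmod x <= M}.
  by apply: in_range => l hl; apply: small; lia.
have large' : {in map w (index_iota t.+1 d.+1), forall x, V <= cmod x}.
  by apply: in_range => l hl; apply: large; lia.
have := cmod_coefM_split_ge M0 V0 K_ge1 MKV small' large'.
rewrite !size_Ps cmod_coef0_Ps -prod_split; last lia.
have -> : (t.+1 - 1 + (d.+1 - t.+1) = d)%N by lia.
by rewrite subn1.
Qed.

Lemma cmod_coef_le_level1 i k t : consecutive isI i k -> (i < t <= k)%N ->
  cmod (P 1 d.+1)`_t <= cmod (P i.+1 d.+1)`_(t - i) + (2 ^ d)%:R / K * tail t.
Proof.
move=> ik /andP[it tk]; have [Ii Ik _ _] := ik; have kd := isI_le Ik.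
set mu := cmod (w k).
have mu_gt0 : 0 < mu by apply: cmod_w_gt0; lia.
have block : forall l, (i < l <= k)%N -> cmod (w l) = mu := cmod_block isI_le cmod_flat ik.
have small : {in map w (index_iota 1 i.+1), forall x, cmod x <= mu / K}.
  apply: in_range => l /andP[l1 li]; rewrite ler_pdivlMr // mulrC.
  apply: le_trans (_ : K * cmod (w i) <= _).
    by rewrite ler_pM2l // cmod_w_mono //; lia.
  by rewrite -(block i.+1) ?cmod_gap //; lia.
have large : {in map w (index_iota i.+1 d.+1), forall x, mu <= cmod x}.
  by apply: in_range => l hl; rewrite -(block i.+1) ?cmod_w_mono //; lia.
have it' : (size (map w (index_iota 1 i.+1)) <= t)%N by rewrite size_Ps; lia.
have MKV : mu / K * K <= mu by rewrite divfK ?lt0r_neq0.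
have := cmod_coefM_split_le_right (ltW (divr_gt0 mu_gt0 K_gt0)) mu_gt0 K_ge1
  MKV small large it'.
rewrite !size_Ps subn1 /= -prod_split; last lia.
have -> : (i + (d.+1 - i.+1) = d)%N by lia.
have iik : (i <= i <= k)%N by rewrite leqnn ltnW // (leq_trans it tk).
have itk : (i <= t <= k)%N by rewrite ltnW.
rewrite cmod_coef0_Ps big_map (tail_block ik iik) (tail_block ik itk).
have -> : (k - i = (k - t) + (t - i))%N by lia.
rewrite exprD; move/le_trans; apply; rewrite lerD2l le_eqVlt; apply/orP; left; apply/eqP.
by field; rewrite lt0r_neq0 // expf_neq0 // lt0r_neq0.
Qed.

Lemma cmod_coef_le_level2 i k t : consecutive isI i k -> (i <= t <= k)%N ->
  cmod (P i.+1 d.+1)`_(t - i) <= ('C(k - i, t - i)%:R + (2 ^ (d - i))%:R / K) * tail t.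
Proof.
move=> ik itk; have [_ Ik ik_lt _] := ik; have kd := isI_le Ik.
set mu := cmod (w k).
have mu_gt0 : 0 < mu by apply: cmod_w_gt0; lia.
have small : {in map w (index_iota i.+1 k.+1), forall x, cmod x <= mu}.
  by apply: in_range => l hl; rewrite (cmod_block isI_le cmod_flat ik) //; lia.
have large : {in map w (index_iota k.+1 d.+1), forall x, mu * K <= cmod x}.
  apply: in_range => l hl; have k_lt_d : (1 <= k < d)%N by lia.
  by rewrite mulrC; apply: le_trans (cmod_gap k_lt_d Ik) _; apply: cmod_w_mono; lia.
have tk' : (t - i <= size (map w (index_iota i.+1 k.+1)))%N by rewrite size_Ps; lia.
have := cmod_coefM_split_le_left (ltW mu_gt0) (mulr_gt0 mu_gt0 K_gt0) K_ge1 (lexx _)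
  small large tk'.
rewrite !size_Ps -prod_split; last lia.
have -> : (k.+1 - i.+1 + (d.+1 - k.+1) = d - i)%N by lia.
have -> : (k.+1 - i.+1 - (t - i) = k - t)%N by lia.
by rewrite subSS cmod_coef0_Ps (tail_block ik itk) mulrA.
Qed.

Hypothesis d_gt0 : (0 < d)%N.

Lemma cmod_coef_ge_at_break t : (t <= d)%N -> isI t ->
  (1 - (2 ^ d)%:R / K) * tail t <= cmod (P 1 d.+1)`_t.
Proof.
move=> td It; have [->|t_gt0] := posnP t.
  apply: (@cmod_coef_split_ge 0 0 (cmod (w 1))); rewrite ?mul0r ?cmod_ge0 ?cmod_w_gt0 //.
    by move=> l; lia.
  by move=> l ld; apply: cmod_w_mono.
have [t_lt_d|] := ltnP t d.
  apply: (@cmod_coef_split_ge t (cmod (w t)) (cmod (w t.+1))); rewrite ?cmod_ge0 //.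
  - by apply: cmod_w_gt0; lia.
  - by rewrite mulrC cmod_gap // t_gt0.
  - by move=> l lt; apply: cmod_w_mono; lia.
  - by move=> l tl; apply: cmod_w_mono; lia.
move=> dt; have {dt td} -> : t = d by apply/eqP; rewrite eqn_leq td.
apply: (@cmod_coef_split_ge d (cmod (w d)) (cmod (w d) * K)); rewrite ?cmod_ge0 //.
- by rewrite mulr_gt0 // cmod_w_gt0 // d_gt0 leqnn.
- by move=> l ld; apply: cmod_w_mono; lia.
- by move=> l; lia.
Qed.

Hypotheses (isI0 : isI 0) (isId : isI d).
Variable Mb : R.
Hypothesis Mb_ge : forall i k, consecutive isI i k -> (2 ^ (k - i))%:R <= Mb.
Hypothesis K_large : (2 ^ d)%:R / K < 1.

Lemma cmod_coef_le t : (t <= d)%N -> cmod (P 1 d.+1)`_t <= (Mb + (2 ^ d)%:R / K) * tail t.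
Proof.
move=> td; have c_ge0 : 0 <= (2 ^ d)%:R / K by rewrite divr_ge0 ?ler0n // ltW.
have [->|t_gt0] := posnP t.
  have [i [k [ik _ _]]] := @consecutive_around isI d 1 isI0 isId d_gt0.
  have Mb_ge1 : 1 <= Mb.
    by apply: le_trans (Mb_ge ik); rewrite ler1n expn_gt0.
  rewrite cmod_coef0_prod_XsubC ler_peMl ?(ltW (tail_gt0 _)) //; lra.
have t_range : (1 <= t <= d)%N by rewrite t_gt0 td.
have [i [k [ik it tk]]] := consecutive_around isI0 isId t_range.
have [_ _ ik_lt _] := ik.
have [itk itk'] : (i < t <= k)%N /\ (i <= t <= k)%N by rewrite it (ltnW it).
have level1 := cmod_coef_le_level1 ik itk.
have level2 := cmod_coef_le_level2 ik itk'.
(* the binomial is at most [2 ^ (k - i) - 1], leaving room for [2 ^ (d - i) / K <= 1] *)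
have binC : 'C(k - i, t - i)%:R + 1 <= Mb.
  by apply: le_trans (Mb_ge ik); rewrite natr1 ler_nat bin_ltn_exp2 // subn_gt0.
have pow_le : (2 ^ (d - i))%:R / K <= 1.
  apply: le_trans (ltW K_large); rewrite ler_wpM2r ?invr_ge0 ?(ltW K_gt0) //.
  by rewrite ler_nat leq_pexp2l // leq_subr.
have coef_le_Mb : 'C(k - i, t - i)%:R + (2 ^ (d - i))%:R / K <= Mb by lra.
have := ler_wpM2r (ltW (tail_gt0 t)) coef_le_Mb.
lra.
Qed.

End ClusteredRoots.

Section Graeffe.
Variable F : idomainType.
Implicit Types f p q : {poly F}.

Lemma graeffeE f :
  graeffe f = (-1) ^+ (size f).-1 *: (even_poly f ^+ 2 - 'X * odd_poly f ^+ 2).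
Proof.
rewrite /graeffe /=; congr (_ *: (_ ^+ 2 - 'X * _ ^+ 2)); apply/polyP => i.
  rewrite coef_poly coef_even_poly mul2n.
  by case: ltnP => // fi; rewrite nth_default // (leq_trans fi) // -addnn leq_addr.
rewrite coef_poly coef_odd_poly mul2n addn1.
by case: ltnP => // fi; rewrite nth_default // (leq_trans fi) // -addnn -addnS leq_addr.
Qed.

Lemma graeffe_comp_Xn2 f : graeffe f \Po 'X^2 = (-1) ^+ (size f).-1 *: (f * (f \Po - 'X)).
Proof.
rewrite graeffeE comp_polyZ; congr (_ *: _).
have f_oppX : f \Po - 'X = even_poly f \Po 'X^2 - (odd_poly f \Po 'X^2) * 'X.
  rewrite -{1}[f]poly_even_odd comp_polyD comp_polyM comp_polyX -!comp_polyA.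
  by rewrite !rmorphXn /= comp_polyX sqrrN mulrN.
rewrite f_oppX; set E := even_poly f; set O := odd_poly f.
rewrite -[in RHS](poly_even_odd f) -/E -/O comp_polyB !comp_polyM comp_polyX.
ring.
Qed.

Lemma comp_polyXn2_inj : injective (fun p => p \Po 'X^2 : {poly F}).
Proof.
move=> p q /= pq; apply/eqP; rewrite -subr_eq0 -(@comp_poly_eq0 _ _ 'X^2).
  by rewrite comp_polyB pq subrr.
by rewrite size_polyXn.
Qed.

Lemma prod_XsubC_mul_comp_oppX (I : Type) (s : seq I) (a : I -> F) :
  \prod_(x <- s) ('X - (a x)%:P) * (\prod_(x <- s) ('X - (a x)%:P) \Po - 'X) =
  (-1) ^+ size s *: (\prod_(x <- s) ('X - (a x ^+ 2)%:P) \Po 'X^2).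
Proof.
rewrite !rmorph_prod /=; elim: s => [|x s IH].
  by rewrite !big_nil mulr1 expr0 scale1r.
rewrite !big_cons /= !comp_polyB !comp_polyX !comp_polyC.
rewrite exprS -scalerA scalerAr -IH scaleN1r rmorphXn /=; ring.
Qed.

Lemma graeffe_scale_prod_XsubC (I : Type) (s : seq I) (a : I -> F) (c : F) : c != 0 ->
  graeffe (c *: \prod_(x <- s) ('X - (a x)%:P)) =
  c ^+ 2 *: \prod_(x <- s) ('X - (a x ^+ 2)%:P).
Proof.
move=> c0; apply: comp_polyXn2_inj => /=.
rewrite graeffe_comp_Xn2 size_scale // size_prod_XsubC /= comp_polyZ -scalerAl.
rewrite -scalerAr prod_XsubC_mul_comp_oppX !scalerA !comp_polyZ; congr (_ *: _).
by rewrite mulrC !mulrA -exprMn mulrNN mulr1 expr1n mul1r expr2.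
Qed.

Lemma iter_graeffe_scale_prod_XsubC (I : Type) (s : seq I) (a : I -> F) (c : F) N :
  c != 0 -> iter N graeffe (c *: \prod_(x <- s) ('X - (a x)%:P)) =
  c ^+ (2 ^ N) *: \prod_(x <- s) ('X - (a x ^+ (2 ^ N))%:P).
Proof.
move=> c0; elim: N => [|N IH].
  by rewrite expn0 expr1; congr (_ *: _); apply: eq_bigr => x _; rewrite expr1.
rewrite iterS IH graeffe_scale_prod_XsubC ?expf_neq0 // -exprM -expnSr.
by under eq_bigr do rewrite -exprM -expnSr.
Qed.

End Graeffe.

Section Slopes.
Variable R : realType.

Lemma ler_divr_addr (x n mu e : R) : 1 <= n -> 0 <= e -> x <= n * mu + e -> x / n <= mu + e.
Proof.
move=> n1 e0 h; have n0 : 0 < n by apply: lt_le_trans n1.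
rewrite ler_pdivrMr //; apply: le_trans h _; rewrite mulrDl [mu * n]mulrC lerD2l.
by rewrite -[X in X <= _]mulr1 ler_wpM2l.
Qed.

Lemma ler_divr_subr (x n mu e : R) : 1 <= n -> 0 <= e -> n * mu - e <= x -> mu - e <= x / n.
Proof.
move=> n1 e0 h; have n0 : 0 < n by apply: lt_le_trans n1.
rewrite ler_pdivlMr //; apply: le_trans h; rewrite mulrBl [mu * n]mulrC lerD2l lerN2.
by rewrite -[X in X <= _]mulr1 ler_wpM2l.
Qed.

Lemma perturbed_slopes_lt (xi xj xk li lj lk mu lr al be E n1 n2 : R) :
  1 <= n1 -> 1 <= n2 -> 0 <= al -> 0 <= be ->
  lj - li = n1 * mu -> n2 * (lr + mu) <= lk - lj ->
  li - al <= xi -> xj <= lj + be -> lk - al <= xk ->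
  2 * al + 4 * be < E -> E < lr / 2 ->
  (xj - xi) / n1 < (xk - xj) / n2 - E.
Proof.
move=> n1_ge1 n2_ge1 al0 be0 eij ejk hi hj hk E_gt E_lt.
have : (xj - xi) / n1 <= mu + (al + be).
  by apply: ler_divr_addr => //; [lra | rewrite -eij; lra].
have : (lr + mu) - (al + be) <= (xk - xj) / n2.
  by apply: ler_divr_subr => //; lra.
lra.
Qed.

Lemma perturbed_slopes_gt (xi xj xk li lj lk mu al be E n1 n2 : R) :
  1 <= n1 -> 1 <= n2 -> 0 <= al -> 0 <= be ->
  lj - li = n1 * mu -> lk - lj = n2 * mu ->
  xi <= li + be -> lj - al <= xj -> xk <= lk + be ->
  2 * al + 4 * be < E ->
  (xk - xj) / n2 - E < (xj - xi) / n1.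
Proof.
move=> n1_ge1 n2_ge1 al0 be0 eij ejk hi hj hk E_gt.
have : (xk - xj) / n2 <= mu + (al + be).
  by apply: ler_divr_addr => //; [lra | rewrite -ejk; lra].
have : mu - (al + be) <= (xj - xi) / n1.
  by apply: ler_divr_subr => //; [lra | rewrite -eij; lra].
lra.
Qed.

Lemma slopeS_fin (r : nat -> \bar R) a b (xa xb : R) :
  r a = xa%:E -> r b = xb%:E -> slopeS r a b = ((xb - xa) / (b - a)%:R)%:E.
Proof. by move=> ra rb; rewrite /slopeS ra rb. Qed.

Lemma slopeS_pinfty (r : nat -> \bar R) a b (xa : R) : (a < b)%N ->
  r a = xa%:E -> r b = +oo%E -> slopeS r a b = +oo%E.
Proof.
move=> ab ra rb; rewrite /slopeS ra rb addye // gt0_mulye // lte_fin invr_gt0 ltr0n.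
by rewrite subn_gt0.
Qed.

Lemma slopeS_ninfty (r : nat -> \bar R) a b (xb : R) : (a < b)%N ->
  r a = +oo%E -> r b = xb%:E -> slopeS r a b = -oo%E.
Proof.
move=> ab ra rb; rewrite /slopeS ra rb /= addeNy // gt0_mulNye // lte_fin invr_gt0 ltr0n.
by rewrite subn_gt0.
Qed.

Lemma oppr_ln_ge (a c L y : R) : 0 < a -> 0 < c -> 0 < L -> 0 < y -> y <= c * L ->
  - a * ln L - a * ln c <= - a * ln y.
Proof.
move=> a0 c0 L0 y0 y_le.
have : ln y <= ln c + ln L by rewrite -lnM ?posrE // ler_ln ?posrE ?mulr_gt0.
move/(ler_wpM2l (ltW a0)); lra.
Qed.

Lemma oppr_ln_le (a c L y : R) : 0 < a -> 0 < c -> 0 < L -> 0 < y -> c * L <= y ->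
  - a * ln y <= - a * ln L - a * ln c.
Proof.
move=> a0 c0 L0 y0 le_y.
have : ln c + ln L <= ln y by rewrite -lnM ?posrE // ler_ln ?posrE ?mulr_gt0.
move/(ler_wpM2l (ltW a0)); lra.
Qed.

End Slopes.

Lemma inI_le (R : realType) d (z : nat -> R[i]) l : inI d z l -> (l <= d)%N.
Proof. by case/or3P=> [/eqP->|/eqP->|/and3P[_ ld _]] //; lia. Qed.

Lemma inI0 (R : realType) d (z : nat -> R[i]) : inI d z 0.
Proof. by rewrite /inI eqxx. Qed.

Lemma inId (R : realType) d (z : nat -> R[i]) : inI d z d.
Proof. by rewrite /inI eqxx orbT. Qed.

Section GraeffeSlopes.
Variables (R : realType) (f : {poly R[i]}) (d : nat) (z : nat -> R[i]) (rho : R).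
Variables (N : nat) (m E : R).
Hypothesis f0_neq0 : f.[0] != 0.
Hypothesis f_factor : f = lead_coef f *: \prod_(1 <= l < d.+1) ('X - (z l)%:P).
Hypothesis cmod_z_step :
  forall l, (1 <= l)%N -> (l < d)%N -> cmod (z l) <= cmod (z l.+1).
Hypothesis rho_attained : exists l, [/\ (1 <= l)%N, (l < d)%N,
  cmod (z l) < cmod (z l.+1) & rho = cmod (z l.+1) / cmod (z l)].
Hypothesis rho_le : forall l, (1 <= l)%N -> (l < d)%N ->
  cmod (z l) < cmod (z l.+1) -> rho <= cmod (z l.+1) / cmod (z l).

Let z_neq0 l : (1 <= l <= d)%N -> z l != 0.
Proof.
move=> l_range; move: f0_neq0; rewrite {1}f_factor hornerZ horner_prod mulf_eq0 negb_or.
case/andP=> _; rewrite prodf_seq_neq0 => /allP /(_ l).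
by rewrite mem_index_iota hornerXsubC sub0r oppr_eq0; apply; lia.
Qed.

Let cmod_z_gt0 l : (1 <= l <= d)%N -> 0 < cmod (z l).
Proof. by move=> l_range; rewrite cmod_gt0 z_neq0. Qed.

Let d_gt0 : (0 < d)%N.
Proof. by case: rho_attained => l [l1 ld _ _]; lia. Qed.

Let rho_gt1 : 1 < rho.
Proof.
case: rho_attained => l [l1 ld lt ->].
by rewrite ltr_pdivlMr ?mul1r // cmod_z_gt0 // l1 ltnW.
Qed.

Let cmod_z_mono l l' : (1 <= l)%N -> (l <= l' <= d)%N -> cmod (z l) <= cmod (z l').
Proof.
move=> l1 /andP[]; elim: l' => [|l' IH]; first lia.
rewrite leq_eqVlt => /orP[/eqP->//|ll'] l'd.
by apply: le_trans (IH ll' (ltnW l'd)) (cmod_z_step _ _); lia.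
Qed.

Let cmod_z_flat l : (1 <= l < d)%N -> ~~ inI d z l -> cmod (z l) = cmod (z l.+1).
Proof.
move=> /andP[l1 ld] notI; apply/le_anti; rewrite cmod_z_step //= leNgt.
by apply: contra notI => lt; apply/or3P/Or33; rewrite l1 lt andbT -ltnS prednK ?d_gt0.
Qed.

Let cmod_z_gap l : (1 <= l < d)%N -> inI d z l -> rho * cmod (z l) <= cmod (z l.+1).
Proof.
move=> /andP[l1 ld] /or3P[/eqP l0|/eqP ld'|/and3P[_ _ lt]]; try lia.
by rewrite -ler_pdivlMr ?rho_le // cmod_z_gt0 // l1 ltnW.
Qed.

Let w l := z l ^+ (2 ^ N).
Let C := lead_coef f ^+ (2 ^ N).
Let Rr := rho ^+ (2 ^ N).
Let g := iter N graeffe f.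
Let delta := 2 ^+ d / Rr.
Let gdom t := cmod C * \prod_(t.+1 <= l < d.+1) cmod (w l).

Let f_neq0 : f != 0.
Proof. by apply: contraNneq f0_neq0 => ->; rewrite horner0. Qed.

Let iter_graeffeE : g = C *: \prod_(1 <= l < d.+1) ('X - (w l)%:P).
Proof. by rewrite /g {1}f_factor iter_graeffe_scale_prod_XsubC // lead_coef_eq0. Qed.

Let cmod_w l : cmod (w l) = cmod (z l) ^+ (2 ^ N).
Proof. exact: cmodX. Qed.

Let Rr_ge1 : 1 <= Rr.
Proof. exact/exprn_ege1/ltW/rho_gt1. Qed.

Let cmod_w_gt0 l : (1 <= l <= d)%N -> 0 < cmod (w l).
Proof. by move=> l_range; rewrite cmod_w exprn_gt0 ?cmod_z_gt0. Qed.

Let cmod_w_mono l l' : (1 <= l)%N -> (l <= l' <= d)%N -> cmod (w l) <= cmod (w l').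
Proof.
by move=> l1 ll'; rewrite !cmod_w lerXn2r ?nnegrE ?cmod_ge0 ?cmod_z_mono.
Qed.

Let cmod_w_gap l : (1 <= l < d)%N -> inI d z l -> Rr * cmod (w l) <= cmod (w l.+1).
Proof.
move=> l_range Il; rewrite !cmod_w /Rr -exprMn lerXn2r ?nnegrE ?cmod_ge0 ?cmod_z_gap //.
by rewrite mulr_ge0 ?cmod_ge0 // ltW // (lt_trans ltr01 rho_gt1).
Qed.

Let cmod_w_flat l : (1 <= l < d)%N -> ~~ inI d z l -> cmod (w l) = cmod (w l.+1).
Proof. by move=> l_range notI; rewrite !cmod_w cmod_z_flat. Qed.

Let C_gt0 : 0 < cmod C.
Proof. by rewrite cmod_gt0 expf_neq0 // lead_coef_eq0. Qed.

Let gdom_gt0 t : 0 < gdom t.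
Proof. by rewrite mulr_gt0 // (tail_gt0 cmod_w_gt0). Qed.

Let cmod_coef_g_ge t : (t <= d)%N -> inI d z t -> (1 - delta) * gdom t <= cmod g`_t.
Proof.
move=> td It; rewrite iter_graeffeE coefZ cmodM /gdom mulrCA ler_wpM2l ?cmod_ge0 //.
rewrite /delta -natrX.
exact: (cmod_coef_ge_at_break cmod_w_gt0 cmod_w_mono cmod_w_gap Rr_ge1 d_gt0 td It).
Qed.

Hypothesis m_ge : forall i1 i2, successive d z i1 i2 -> (i2 - i1)%:R <= m.
Hypothesis delta_lt1 : 2 ^+ d / Rr < 1.

Let exp2_le_powR i k : successive d z i k -> (2 ^ (k - i))%:R <= 2 `^ m.
Proof.
move=> ik; rewrite natrX -powR_mulrn ?ler0n // ler_powR ?ler1n //; exact: m_ge.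
Qed.

Let powR_m_ge1 : 1 <= 2 `^ m.
Proof.
have [i [k [ik _ _]]] := @consecutive_around (inI d z) d 1 (inI0 d z) (inId d z) d_gt0.
by apply: le_trans (exp2_le_powR ik); rewrite ler1n expn_gt0.
Qed.

Let cmod_coef_g_le t : (t <= d)%N -> cmod g`_t <= (2 `^ m + delta) * gdom t.
Proof.
move=> td; rewrite iter_graeffeE coefZ cmodM /gdom mulrCA ler_wpM2l ?cmod_ge0 //.
have K_large : (2 ^ d)%:R / Rr < 1 by rewrite natrX.
rewrite /delta -natrX.
exact: (cmod_coef_le (@inI_le R d z) cmod_w_gt0 cmod_w_mono cmod_w_gap cmod_w_flat
  Rr_ge1 d_gt0 (inI0 d z) (inId d z) exp2_le_powR K_large td).
Qed.

Let a : R := 2 ^- N.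
Let rfin t := - a * ln (cmod g`_t).
Let lambda t := - a * ln (gdom t).
Let alpha := a * ln (2 `^ m + delta).
Let beta := - (a * ln (1 - delta)).

Let a_gt0 : 0 < a. Proof. by rewrite invr_gt0 exprn_gt0. Qed.

Let delta_ge0 : 0 <= delta.
Proof. by rewrite /delta divr_ge0 ?exprn_ge0 ?ler0n // ltW // (lt_trans ltr01 rho_gt1). Qed.

Let coef_g_neq0 t : (t <= d)%N -> inI d z t -> g`_t != 0.
Proof.
move=> td It; rewrite -cmod_gt0; apply: lt_le_trans (cmod_coef_g_ge td It).
by rewrite mulr_gt0 ?subr_gt0.
Qed.

Let rcoefE t : g`_t != 0 -> rcoef N g t = (rfin t)%:E.
Proof. by move=> gt; rewrite /rcoef (negbTE gt). Qed.

Let rfin_ge t : (t <= d)%N -> g`_t != 0 -> lambda t - alpha <= rfin t.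
Proof.
move=> td gt; apply: oppr_ln_ge (cmod_coef_g_le td); rewrite ?cmod_gt0 //.
by rewrite (lt_le_trans ltr01) // (le_trans powR_m_ge1) // lerDl.
Qed.

Let rfin_le t : (t <= d)%N -> inI d z t -> rfin t <= lambda t + beta.
Proof.
move=> td It; apply: oppr_ln_le (cmod_coef_g_ge td It); rewrite ?subr_gt0 //.
by rewrite cmod_gt0 coef_g_neq0.
Qed.

Let lambda_sub p q : (p <= q <= d)%N ->
  lambda q - lambda p = ln (\prod_(p.+1 <= l < q.+1) cmod (z l)).
Proof.
move=> /andP[pq qd].
have Pi_gt0 : 0 < \prod_(p.+1 <= l < q.+1) cmod (z l).
  rewrite big_nat_cond prodr_gt0 // => l /andP[/andP[pl lq] _].
  by apply: cmod_z_gt0; clear -pl lq qd; lia.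
have gdom_split : gdom p = (\prod_(p.+1 <= l < q.+1) cmod (z l)) ^+ (2 ^ N) * gdom q.
  rewrite /gdom mulrCA (big_cat_nat _ (n := q.+1)) ?ltnS //=.
  by rewrite -prodrXl; congr (_ * (_ * _)); apply: eq_bigr => l _; rewrite cmod_w.
rewrite /lambda gdom_split; set Pi := \prod_(_ <= _ < _) _.
rewrite (@lnM _ (Pi ^+ (2 ^ N)) (gdom q)) ?posrE ?exprn_gt0 ?gdom_gt0 //.
rewrite lnXn // -mulr_natr natrX.
have aK : a * 2 ^+ N = 1 by rewrite mulVf // expf_neq0 // pnatr_eq0.
by transitivity (ln Pi * (a * 2 ^+ N)); [ring | rewrite aK mulr1].
Qed.

Hypothesis E_gt : 2 ^- N * 2 * ln (2 `^ m + 2 ^+ d / Rr) -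
  2 ^- N * 4 * ln (1 - 2 ^+ d / Rr) < E.
Hypothesis E_lt : E < ln rho / 2.

Let alpha_ge0 : 0 <= alpha.
Proof. by rewrite mulr_ge0 ?ln_ge0 ?(ltW a_gt0) // (le_trans powR_m_ge1) // lerDl. Qed.

Let beta_ge0 : 0 <= beta.
Proof. by rewrite oppr_ge0 mulr_ge0_le0 ?ln_le0 ?(ltW a_gt0) // lerBlDr lerDl. Qed.

Let alpha_beta_lt_E : 2 * alpha + 4 * beta < E.
Proof.
suff -> : 2 * alpha + 4 * beta =
  2 ^- N * 2 * ln (2 `^ m + delta) - 2 ^- N * 4 * ln (1 - delta) by [].
by rewrite /alpha /beta /a; ring.
Qed.

Let prod_cmod_z_ge j k : (1 <= j)%N -> (j < k <= d)%N -> inI d z j ->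
  (rho * cmod (z j)) ^+ (k - j) <= \prod_(j.+1 <= l < k.+1) cmod (z l).
Proof.
move=> j1 /andP[jk kd] Ij.
rewrite -(subSS j k) -prodr_const_nat big_nat_cond [X in _ <= X]big_nat_cond.
apply: ler_prod => l /andP[/andP[jl lk] _].
rewrite mulr_ge0 ?cmod_ge0 ?(ltW (lt_trans ltr01 rho_gt1)) //=.
by apply: le_trans (cmod_z_gap _ Ij) (cmod_z_mono _ _); clear -j1 jk kd jl lk; lia.
Qed.

Lemma slopeS_lt_at_break i j k : (i < j < k)%N -> (k <= d)%N -> successive d z i j ->
  (slopeS (rcoef N g) i j < slopeS (rcoef N g) j k - E%:E)%E.
Proof.
move=> /andP[ij jk] kd ij_succ; have [Ii Ij _ _] := ij_succ.
have [j1 id jd] : [/\ (1 <= j)%N, (i <= d)%N & (j <= d)%N].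
  by clear -ij jk kd; split; lia.
have mu_gt0 : 0 < cmod (z j) by rewrite cmod_z_gt0 // j1 jd.
have rho_gt0 : 0 < rho := lt_trans ltr01 rho_gt1.
have eij : lambda j - lambda i = (j - i)%:R * ln (cmod (z j)).
  have iij : (i <= i <= j)%N by rewrite leqnn ltnW.
  rewrite lambda_sub ?(ltnW ij) ?jd // (prod_cmod_block (@inI_le R d z) cmod_z_flat ij_succ iij) //.
  by rewrite lnXn ?mulr_natl.
have ejk : (k - j)%:R * (ln rho + ln (cmod (z j))) <= lambda k - lambda j.
  have jkd : (j < k <= d)%N by rewrite jk.
  have Pi_ge := prod_cmod_z_ge j1 jkd Ij.
  rewrite lambda_sub ?(ltnW jk) ?kd // -lnM ?posrE // mulr_natl -lnXn ?mulr_gt0 //.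
  by rewrite ler_ln ?posrE ?(lt_le_trans _ Pi_ge) ?exprn_gt0 ?mulr_gt0.
have gi := coef_g_neq0 id Ii; have gj := coef_g_neq0 jd Ij.
rewrite (slopeS_fin (rcoefE gi) (rcoefE gj)).
have [gk0|gk] := eqVneq g`_k 0.
  have rk : rcoef N g k = +oo%E by rewrite /rcoef gk0 eqxx.
  by rewrite (slopeS_pinfty jk (rcoefE gj) rk) addye ?ltry.
rewrite (slopeS_fin (rcoefE gj) (rcoefE gk)) -EFinB lte_fin.
have n1 : 1 <= (j - i)%:R :> R by rewrite ler1n subn_gt0.
have n2 : 1 <= (k - j)%:R :> R by rewrite ler1n subn_gt0.
exact: (perturbed_slopes_lt n1 n2 alpha_ge0 beta_ge0 eij ejk (rfin_ge id gi) (rfin_le jd Ij)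
  (rfin_ge kd gk) alpha_beta_lt_E E_lt).
Qed.

Lemma slopeS_gt_in_block i j k : (i < j < k)%N -> (k <= d)%N -> successive d z i k ->
  (slopeS (rcoef N g) j k - E%:E < slopeS (rcoef N g) i j)%E.
Proof.
move=> /andP[ij jk] kd ik_succ; have [Ii Ik _ _] := ik_succ.
have [k1 id jd] : [/\ (1 <= k)%N, (i <= d)%N & (j <= d)%N].
  by clear -ij jk kd; split; lia.
have mu_gt0 : 0 < cmod (z k) by rewrite cmod_z_gt0 // k1 kd.
have lam_block p q : (i <= p <= q)%N -> (q <= k)%N ->
    lambda q - lambda p = (q - p)%:R * ln (cmod (z k)).
  move=> ipq qk; rewrite lambda_sub; last by clear -ipq qk kd; lia.
  by rewrite (prod_cmod_block (@inI_le R d z) cmod_z_flat ik_succ ipq qk) lnXn ?mulr_natl.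
have [iij ijk] : (i <= i <= j)%N /\ (i <= j <= k)%N by rewrite leqnn (ltnW ij) (ltnW jk).
have eij := lam_block i j iij (ltnW jk).
have ejk := lam_block j k ijk (leqnn k).
have gi := coef_g_neq0 id Ii; have gk := coef_g_neq0 kd Ik.
have [gj0|gj] := eqVneq g`_j 0.
  have rj : rcoef N g j = +oo%E by rewrite /rcoef gj0 eqxx.
  by rewrite (slopeS_pinfty ij (rcoefE gi) rj) (slopeS_ninfty jk rj (rcoefE gk)) addNye ?ltNye.
rewrite (slopeS_fin (rcoefE gi) (rcoefE gj)) (slopeS_fin (rcoefE gj) (rcoefE gk)).
rewrite -EFinB lte_fin.
have n1 : 1 <= (j - i)%:R :> R by rewrite ler1n subn_gt0.
have n2 : 1 <= (k - j)%:R :> R by rewrite ler1n subn_gt0.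
exact: (perturbed_slopes_gt n1 n2 alpha_ge0 beta_ge0 eij ejk (rfin_le id Ii) (rfin_ge jd gj)
  (rfin_le kd Ik) alpha_beta_lt_E).
Qed.

End GraeffeSlopes.

Theorem mainTheorem5 (R : realType) (f : {poly R[i]}) (d : nat)
  (z : nat -> R[i]) (rho : R) (N : nat) (m E : R) (i j k : nat) :
  (size f).-1 = d ->
  f.[0] != 0 ->
  f = lead_coef f *: \prod_(1 <= l < d.+1) ('X - (z l)%:P) ->
  (forall l, (1 <= l)%N -> (l < d)%N -> cmod (z l) <= cmod (z l.+1)) ->
  (exists l, [/\ (1 <= l)%N, (l < d)%N & cmod (z l) < cmod (z l.+1)]) ->
  (* rho = min { |z_{l+1}|/|z_l| : |z_{l+1}| > |z_l| } *)
  (exists l, [/\ (1 <= l)%N, (l < d)%N, cmod (z l) < cmod (z l.+1)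
                & rho = cmod (z l.+1) / cmod (z l)]) ->
  (forall l, (1 <= l)%N -> (l < d)%N -> cmod (z l) < cmod (z l.+1) ->
     rho <= cmod (z l.+1) / cmod (z l)) ->
  let Rr := rho ^+ (2 ^ N) in
  let g := iter N graeffe f in
  let r := rcoef N g in
  (* (a) *)
  (forall i1 i2, successive d z i1 i2 -> (i2 - i1)%:R <= m) ->
  (* (b), including the implicit requirement 2^d R^{-1} < 1 *)
  2 ^+ d / Rr < 1 ->
  2 ^- N * 2 * ln (2 `^ m + 2 ^+ d / Rr) - 2 ^- N * 4 * ln (1 - 2 ^+ d / Rr) < E ->
  E < ln rho / 2 ->
  (* (c) *)
  (i < j < k)%N -> (k <= d)%N ->
  (successive d z i j -> (forall l, (j < l < k)%N -> ~~ inI d z l) ->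
     (slopeS r i j < slopeS r j k - E%:E)%E) /\
  (successive d z i k -> (slopeS r i j > slopeS r j k - E%:E)%E).
Proof.
(* The degree hypothesis and the existence of a strict jump follow from the
   factorization and from [rho] being attained; part 1 needs no assumption on
   the indices between [j] and [k]. *)
move=> _ f0 f_factor z_step _ rho_att rho_min Rr g r m_ge delta_lt1 E_gt E_lt ijk kd.
split=> [ij_succ _ | ik_succ].
  exact: (slopeS_lt_at_break f0 f_factor z_step rho_att rho_min m_ge delta_lt1 E_gt E_lt
    ijk kd ij_succ).
exact: (slopeS_gt_in_block f0 f_factor z_step rho_att rho_min m_ge delta_lt1 E_gt
  ijk kd ik_succ).
Qed.
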